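(* Let $a<b$ and let $f,g:[a,b]\to\mathbb{R}$ be continuous and differentiable (from the right) at $a$. For $a<x\le b$ write $I_f(a,x)=\frac{1}{x-a}\int_a^x f(t)\,\mathrm{d}t$ and similarly $I_g(a,x)$. If $$\bigl[f(a)\,I_g(a,b)-g(a)\,I_f(a,b)\bigr]\cdot\bigl[f'(a)\,I_g(a,b)-g'(a)\,I_f(a,b)\bigr]> 0,$$ then there exists $\xi\in(a,b)$ such that $$I_g(a,b)\bigl(f(a)-I_f(a,\xi)\bigr)=I_f(a,b)\bigl(g(a)-I_g(a,\xi)\bigr).$$ *)

From Stdlib Require Import Reals.
From Coquelicot Require Import Coquelicot.
Open Scope R_scope.

Definition continuous_on_closed (f : R -> R) (a b : R) : Prop :=
  forall x, a <= x <= b ->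
    filterlim f (within (fun y => a <= y <= b) (locally x)) (locally (f x)).

Definition right_derive (f : R -> R) (a l : R) : Prop :=
  filterlim (fun x => (f x - f a) / (x - a)) (at_right a) (locally l).

Definition Imean (f : R -> R) (a x : R) : R := RInt f a x / (x - a).

(* Put A = I_f(a,b), B = I_g(a,b), c = f(a) B - g(a) A and k = c (B f - A g).
   Then k(a) = c^2 > 0, k'(a) = c (f'(a) B - g'(a) A) > 0 and I_k(a,b) = 0.
   Since k rises above k(a) just to the right of a, the function
   x |-> int_a^x (k - k(a)) is positive near a but negative at b, so it vanishes
   at some xi in (a,b); that is I_k(a,xi) = k(a), and dividing by c gives the
   claimed identity by linearity of the integral mean. *)

From Stdlib Require Import Reals Lra.
From Coquelicot Require Import Coquelicot.
Open Scope R_scope.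

(* Functions continuous on [a,b] are integrated through their extension
   [fun y => f (clamp a b y)], which is continuous on all of R. *)
Definition clamp (a b y : R) : R := Rmax a (Rmin b y).

Lemma clamp_in a b y : a <= b -> a <= clamp a b y <= b.
Proof. intros; unfold clamp, Rmax, Rmin; repeat destruct Rle_dec; lra. Qed.

Lemma clamp_id a b y : a <= y <= b -> clamp a b y = y.
Proof. intros; unfold clamp, Rmax, Rmin; repeat destruct Rle_dec; lra. Qed.

Lemma clamp_lipschitz a b x y :
  a <= b -> Rabs (clamp a b y - clamp a b x) <= Rabs (y - x).
Proof.
  intros; unfold clamp, Rmax, Rmin; repeat destruct Rle_dec; unfold Rabs;
    repeat destruct Rcase_abs; lra.
Qed.

Lemma continuous_clamp (f : R -> R) a b x :
  a <= b -> continuous_on_closed f a b -> continuous (fun y => f (clamp a b y)) x.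
Proof.
  intros Hab Hf P HP.
  destruct (Hf (clamp a b x) (clamp_in a b x Hab) P HP) as [e He].
  exists e; intros y Hy; apply He.
  - change (Rabs (clamp a b y - clamp a b x) < e).
    change (Rabs (y - x) < e) in Hy.
    pose proof (clamp_lipschitz a b x y Hab); lra.
  - now apply clamp_in.
Qed.

Lemma RInt_clamp (f : R -> R) a b x :
  a <= x <= b -> RInt (fun y => f (clamp a b y)) a x = RInt f a x.
Proof.
  intros Hx; apply RInt_ext; intros t Ht.
  rewrite Rmin_left, Rmax_right in Ht by lra.
  rewrite clamp_id; lra.
Qed.

Lemma ex_RInt_on_closed (f : R -> R) a b x :
  a <= x <= b -> continuous_on_closed f a b -> ex_RInt f a x.
Proof.
  intros Hx Hf.
  apply (ex_RInt_ext (fun y => f (clamp a b y))).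
  - intros t Ht; rewrite Rmin_left, Rmax_right in Ht by lra.
    rewrite clamp_id; lra.
  - apply (@ex_RInt_continuous R_CompleteNormedModule); intros.
    apply continuous_clamp; [lra | exact Hf].
Qed.

Lemma continuous_RInt_upper (h : R -> R) a x :
  (forall y, continuous h y) -> continuous (RInt h a) x.
Proof.
  intros Hh; apply (ex_derive_continuous (RInt h a)); exists (h x).
  apply (is_derive_RInt h (RInt h a) a x); [| apply Hh].
  apply filter_forall; intros y; apply (@RInt_correct R_CompleteNormedModule).
  apply (@ex_RInt_continuous R_CompleteNormedModule); intros; apply Hh.
Qed.

Lemma filterlim_lincomb {T} (F : (T -> Prop) -> Prop) {FF : Filter F}
    (f g : T -> R) (lf lg p q : R) :
  filterlim f F (locally lf) -> filterlim g F (locally lg) ->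
  filterlim (fun t => p * f t + q * g t) F (locally (p * lf + q * lg)).
Proof.
  intros Hf Hg.
  change (filterlim (fun t => plus (scal p (f t)) (scal q (g t))) F
            (locally (plus (scal p lf) (scal q lg)))).
  eapply filterlim_comp_2.
  - eapply filterlim_comp; [exact Hf | apply (@filterlim_scal_r R_AbsRing R_NormedModule)].
  - eapply filterlim_comp; [exact Hg | apply (@filterlim_scal_r R_AbsRing R_NormedModule)].
  - apply (@filterlim_plus R_AbsRing R_NormedModule).
Qed.

Lemma continuous_on_closed_lincomb (f g : R -> R) a b p q :
  continuous_on_closed f a b -> continuous_on_closed g a b ->
  continuous_on_closed (fun t => p * f t + q * g t) a b.
Proof.
  intros Hf Hg x Hx.
  apply filterlim_lincomb; [apply within_filter, locally_filter | apply Hf | apply Hg];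
    exact Hx.
Qed.

Lemma right_derive_lincomb (f g : R -> R) a df dg p q :
  right_derive f a df -> right_derive g a dg ->
  right_derive (fun t => p * f t + q * g t) a (p * df + q * dg).
Proof.
  intros Hf Hg; unfold right_derive.
  eapply filterlim_ext; [| exact (filterlim_lincomb _ _ _ _ _ p q Hf Hg)].
  intros t; cbv beta; unfold Rdiv; ring.
Qed.

Lemma Imean_lincomb (f g : R -> R) a x p q :
  ex_RInt f a x -> ex_RInt g a x ->
  Imean (fun t => p * f t + q * g t) a x = p * Imean f a x + q * Imean g a x.
Proof.
  intros Hf Hg; unfold Imean.
  assert (E : RInt (fun t => p * f t + q * g t) a x = p * RInt f a x + q * RInt g a x).
  { etransitivity.
    - exact (RInt_plus (fun t => scal p (f t)) (fun t => scal q (g t)) a x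
               (ex_RInt_scal _ _ _ p Hf) (ex_RInt_scal _ _ _ q Hg)).
    - apply f_equal2; apply (@RInt_scal R_CompleteNormedModule); assumption. }
  rewrite E; unfold Rdiv; ring.
Qed.

Lemma right_derive_pos_near (h : R -> R) a dh :
  right_derive h a dh -> 0 < dh -> at_right a (fun t => h a < h t).
Proof.
  intros Hh Hdh.
  assert (Hq : at_right a (fun t => 0 < (h t - h a) / (t - a))).
  { apply Hh; apply (open_gt 0); exact Hdh. }
  assert (Hright : at_right a (fun t => a < t)) by now exists (mkposreal 1 Rlt_0_1).
  generalize (filter_and _ _ Hq Hright); apply filter_imp.
  intros t [Hpos Hat].
  assert (E : h t - h a = (h t - h a) / (t - a) * (t - a)) by (field; lra).
  assert (0 < (h t - h a) / (t - a) * (t - a)) by (apply Rmult_lt_0_compat; lra).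
  lra.
Qed.

Lemma RInt_gt_const_near (h : R -> R) a b dh :
  a < b -> continuous_on_closed h a b -> right_derive h a dh -> 0 < dh ->
  exists x0, a < x0 < b /\ h a * (x0 - a) < RInt h a x0.
Proof.
  intros Hab Hh Hdh Hdh_pos.
  destruct (right_derive_pos_near h a dh Hdh Hdh_pos) as [d Hd].
  set (x0 := Rmin (a + d / 2) ((a + b) / 2)).
  assert (Hx0 : a < x0 < b /\ x0 < a + d).
  { unfold x0, Rmin; destruct Rle_dec; destruct d; simpl in *; lra. }
  exists x0; split; [lra |].
  rewrite <- (RInt_clamp h a b x0) by lra.
  replace (h a * (x0 - a)) with (RInt (fun _ => h a) a x0)
    by (rewrite (@RInt_const R_CompleteNormedModule); apply Rmult_comm).
  apply RInt_lt; [lra | intros; apply continuous_clamp; [lra | exact Hh]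
                 | intros; apply continuous_const |].
  intros t Ht; rewrite clamp_id by lra; apply Hd; [| lra].
  change (Rabs (t - a) < d); rewrite Rabs_right; lra.
Qed.

Lemma Imean_crossing (h : R -> R) a b dh :
  a < b -> continuous_on_closed h a b -> right_derive h a dh -> 0 < dh ->
  Imean h a b < h a ->
  exists xi, a < xi < b /\ Imean h a xi = h a.
Proof.
  intros Hab Hh Hdh Hdh_pos Hmean.
  set (phi := fun x => RInt (fun y => h (clamp a b y)) a x - h a * (x - a)).
  destruct (RInt_gt_const_near h a b dh Hab Hh Hdh Hdh_pos) as [x0 [Hx0 Hinit]].
  assert (Hphi0 : 0 < phi x0) by (unfold phi; rewrite RInt_clamp; lra).
  assert (Hphib : phi b < 0).
  { unfold phi; rewrite RInt_clamp by lra.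
    unfold Imean, Rdiv in Hmean; apply Rmult_lt_compat_r with (r := b - a) in Hmean; [| lra].
    rewrite Rmult_assoc, Rinv_l, Rmult_1_r in Hmean by lra.
    lra. }
  assert (Hcont : continuity phi).
  { intros x; apply continuity_pt_filterlim; unfold phi.
    apply (continuous_minus (RInt (fun y => h (clamp a b y)) a) (fun x => h a * (x - a))).
    - apply continuous_RInt_upper; intros; apply continuous_clamp; [lra | exact Hh].
    - apply continuity_pt_filterlim; reg. }
  destruct (IVT_gen phi x0 b 0 Hcont) as [xi [Hxi Hzero]].
  { rewrite Rmin_right, Rmax_left by lra; lra. }
  rewrite Rmin_left, Rmax_right in Hxi by lra.
  assert (Hxib : xi <> b) by (intros ->; lra).
  exists xi; split; [lra |].
  unfold phi in Hzero; rewrite RInt_clamp in Hzero by lra.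
  unfold Imean, Rdiv; apply (Rmult_eq_reg_r (xi - a)); [| lra].
  rewrite Rmult_assoc, Rinv_l, Rmult_1_r by lra; lra.
Qed.

Theorem mainTheorem11 (a b : R) (f g : R -> R) (df dg : R) :
  a < b ->
  continuous_on_closed f a b -> continuous_on_closed g a b ->
  right_derive f a df -> right_derive g a dg ->
  (f a * Imean g a b - g a * Imean f a b) * (df * Imean g a b - dg * Imean f a b) > 0 ->
  exists xi, a < xi < b /\
    Imean g a b * (f a - Imean f a xi) = Imean f a b * (g a - Imean g a xi).
Proof.
  intros Hab Hf Hg Hdf Hdg Hpos.
  set (A := Imean f a b) in *; set (B := Imean g a b) in *.
  set (c := f a * B - g a * A) in Hpos.
  assert (Hc : c <> 0) by (intros E; rewrite E in Hpos; lra).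
  assert (Hmean : forall x, a <= x <= b ->
    Imean (fun t => c * B * f t + - (c * A) * g t) a x
    = c * B * Imean f a x - c * A * Imean g a x).
  { intros x Hx; rewrite Imean_lincomb by (eapply ex_RInt_on_closed; eauto); ring. }
  destruct (Imean_crossing (fun t => c * B * f t + - (c * A) * g t) a b
              (c * B * df + - (c * A) * dg)) as [xi [Hxi Hcross]].
  - exact Hab.
  - now apply continuous_on_closed_lincomb.
  - now apply right_derive_lincomb.
  - replace (c * B * df + - (c * A) * dg) with (c * (df * B - dg * A)) by ring; lra.
  - rewrite Hmean by lra; fold A B.
    replace (c * B * A - c * A * B) with 0 by ring.
    replace (c * B * f a + - (c * A) * g a) with (c * c) by (unfold c; ring).
    pose proof (Rsqr_pos_lt c Hc); unfold Rsqr in *; lra.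
  - exists xi; split; [exact Hxi |].
    rewrite Hmean in Hcross by lra.
    apply (Rmult_eq_reg_l c); [| exact Hc].
    apply Rminus_diag_uniq.
    replace (c * (B * (f a - Imean f a xi)) - c * (A * (g a - Imean g a xi)))
      with ((c * B * f a + - (c * A) * g a)
            - (c * B * Imean f a xi - c * A * Imean g a xi)) by ring.
    rewrite Hcross; ring.
Qed.
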